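(* Let $k\in\mathbb Z_{>0}$, $1+\frac{k+2}{(k+1)n}<p<1+\frac{k+1}{kn}$, $u_0\in L^1_1(\mathbb R^n)\cap L^\infty(\mathbb R^n)$, and $u$ the global solution with initial datum $u_0$. Then for all $t\ge1$, $\mathcal A_{1,k}(t)-\mathcal A_{0,k}(t)=t^{-1/2}\delta_t\big(\mathcal A_{1,k}(1)-\mathcal A_{0,k}(1)\big)$, and $$\mathcal A_{1,k}(1)-\mathcal A_{0,k}(1)=\frac12\sum_{j=1}^n\big(\mathcal M_{e_j}(u_0)-a_j\mathcal M_0(\psi_{0,k})\big)x_jG_1.$$ In particular, $\mathcal A_{1,k}(1)-\mathcal A_{0,k}(1)\not\equiv0$ if and only if there exists $j$ with $\mathcal M_{e_j}(u_0)-a_j\mathcal M_0(\psi_{0,k})\ne0$.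
   Context: Let $n\ge1$, $a=(a_1,\dots,a_n)\in\mathbb R^n\setminus\{0\}$, $p\in(1,\infty)$, and let $f\in C^1(\mathbb R)$, $f\not\equiv0$, $f(0)=0$, satisfy $|f(\xi)-f(\eta)|\le C(|\xi|^{p-1}+|\eta|^{p-1})|\xi-\eta|$. $L^1_1=\{\varphi\in L^1(\mathbb R^n): x_j\varphi\in L^1\ \forall j\}$. $G_t(x)=(4\pi t)^{-n/2}e^{-|x|^2/(4t)}$, $e^{t\Delta}\varphi=G_t*\varphi$. The global solution for $u_0\in L^1\cap L^\infty$ is the unique $u\in (C\cap L^\infty)([0,\infty);L^1)\cap(C\cap L^\infty)((0,\infty);L^\infty)$ with $u(t)=e^{t\Delta}u_0+\int_0^ta\cdot\nabla e^{(t-s)\Delta}f(u(s))ds$ for all $t>0$. $(\delta_t\varphi)(x)=t^{-n/2}\varphi(t^{-1/2}x)$; $\mathcal M_0(\varphi)=\int\varphi$; $\mathcal M_{e_j}(\varphi)=\int x_j\varphi$; $\mathcal A_0(t)=\mathcal M_0(u_0)G_t$. $\mathcal A_{0,0}=\mathcal A_0$, and for $k\ge1$, $\mathcal A_{0,k}(t)=\mathcal A_0(t)+\int_0^1a\cdot\nabla e^{(t-s)\Delta}f(\mathcal A_0(s))ds+\int_1^ta\cdot\nabla e^{(t-s)\Delta}f(\mathcal A_{0,k-1}(s))ds$. $\Lambda_{e_j,0}(t;\varphi)=-\frac12t^{-1/2}\mathcal M_0(\varphi)\delta_t(x_jG_1)$. $\psi_{0,k}=\int_0^1(f(u(s))-f(\mathcal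 A_0(s)))ds+\int_1^\infty(f(u(s))-f(\mathcal A_{0,k-1}(s)))ds$; $\mathcal A_{1,k}(t)=\mathcal A_{0,k}(t)+\frac12t^{-1/2}\sum_j\mathcal M_{e_j}(u_0)\delta_t(x_jG_1)+\sum_ja_j\Lambda_{e_j,0}(t;\psi_{0,k})$. *)

(* Lebesgue integration on R^n is realised as iterated
   one-dimensional Lebesgue integration (Fubini/Tonelli). *)
From HB Require Import structures.
From mathcomp Require Import all_boot all_order all_algebra.
From mathcomp Require Import all_classical all_reals all_analysis.
Set Implicit Arguments. Unset Strict Implicit. Unset Printing Implicit Defensive.
Import Order.TTheory GRing.Theory Num.Theory.
Import numFieldNormedType.Exports.
Local Open Scope classical_set_scope.
Local Open Scope ring_scope.

Section Defs.
Variable R : realType.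
Local Notation leb := (@lebesgue_measure R).

Fixpoint intRn (n : nat) : ('rV[R]_n -> R) -> R :=
  match n return ('rV[R]_n -> R) -> R with
  | 0 => fun f => f 0
  | m.+1 => fun f =>
      Rintegral leb setT (fun t : R => intRn (fun y : 'rV[R]_m =>
          f (row_mx (const_mx t : 'rV[R]_1) y)))
  end.

Fixpoint intRn_e (n : nat) : ('rV[R]_n -> \bar R) -> \bar R :=
  match n return ('rV[R]_n -> \bar R) -> \bar R with
  | 0 => fun f => f 0
  | m.+1 => fun f =>
      (\int[leb]_(t in setT) intRn_e (fun y : 'rV[R]_m =>
          f (row_mx (const_mx t : 'rV[R]_1) y)))%E
  end.

Definition borel_Rn (n : nat) (f : 'rV[R]_n -> R) : Prop :=
  forall B : set R, measurable B ->
    <<s [set U : set 'rV[R]_n | open U] >> (f @^-1` B).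

Definition negligible_Rn (n : nat) (A : set 'rV[R]_n) : Prop :=
  intRn_e (fun x => (\1_A x)%:E) = 0%E.

Definition ae_bounded_by (n : nat) (g : 'rV[R]_n -> R) (M : R) : Prop :=
  negligible_Rn [set x | M < `|g x|].

Definition L1 (n : nat) (f : 'rV[R]_n -> R) : Prop :=
  borel_Rn f /\ (intRn_e (fun x => (`|f x|)%:E) < +oo)%E.

Definition Linfty (n : nat) (f : 'rV[R]_n -> R) : Prop :=
  borel_Rn f /\ exists M : R, ae_bounded_by f M.

Definition L1_1 (n : nat) (f : 'rV[R]_n -> R) : Prop :=
  L1 f /\ forall j : 'I_n, L1 (fun x => x 0 j * f x).

Definition L1_norm_le (n : nat) (g : 'rV[R]_n -> R) (e : R) : Prop :=
  (intRn_e (fun x => (`|g x|)%:E) <= e%:E)%E.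

Definition sqnorm (n : nat) (x : 'rV[R]_n) : R := \sum_(j < n) x 0 j ^+ 2.

Definition G (n : nat) (t : R) (x : 'rV[R]_n) : R :=
  (Num.sqrt (4 * pi * t)) ^- n * expR (- (sqnorm x / (4 * t))).

Definition heat (n : nat) (t : R) (phi : 'rV[R]_n -> R) (x : 'rV[R]_n) : R :=
  intRn (fun y => G t (x - y) * phi y).

Definition partial (n : nat) (j : 'I_n) (F : 'rV[R]_n -> R) (x : 'rV[R]_n) : R :=
  derive1 (fun h : R => F (x + h *: delta_mx 0 j)) 0.

Definition adv (n : nat) (a : 'rV[R]_n) (t : R) (phi : 'rV[R]_n -> R)
  (x : 'rV[R]_n) : R :=
  \sum_(j < n) a 0 j * partial j (heat t phi) x.

Definition duhamel (n : nat) (a : 'rV[R]_n) (g : R -> 'rV[R]_n -> R)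
  (I : set R) (t : R) (x : 'rV[R]_n) : R :=
  Rintegral leb I (fun s => adv a (t - s) (g s) x).

(* global solution of u_t = Delta u + a . grad f(u), u(0) = u0 *)
Definition global_solution (n : nat) (a : 'rV[R]_n) (f : R -> R)
  (u0 : 'rV[R]_n -> R) (u : R -> 'rV[R]_n -> R) : Prop :=
  (* u in C([0,oo); L^1) *)
  (forall t, 0 <= t -> L1 (u t)) /\
  (forall t, 0 <= t -> forall e, 0 < e -> exists2 d, 0 < d &
     forall s, 0 <= s -> `|s - t| < d -> L1_norm_le (fun x => u s x - u t x) e) /\
  (* u in L^oo(0,oo; L^1) *)
  (exists M, forall t, 0 <= t -> L1_norm_le (u t) M) /\
  (* u in C((0,oo); L^oo) *)
  (forall t, 0 < t -> Linfty (u t)) /\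
  (forall t, 0 < t -> forall e, 0 < e -> exists2 d, 0 < d &
     forall s, 0 < s -> `|s - t| < d -> ae_bounded_by (fun x => u s x - u t x) e) /\
  (* u in L^oo(0,oo; L^oo) *)
  (exists M, forall t, 0 < t -> ae_bounded_by (u t) M) /\
  (* Duhamel formula, as an identity in L^1 (a.e. in x), for all t > 0 *)
  (forall t, 0 < t ->
     ae_bounded_by (fun x => u t x - (heat t u0 x
        + duhamel a (fun s y => f (u s y)) `[0, t] t x)) 0).

Definition M0 (n : nat) (phi : 'rV[R]_n -> R) : R := intRn phi.
Definition Me (n : nat) (j : 'I_n) (phi : 'rV[R]_n -> R) : R :=
  intRn (fun x => x 0 j * phi x).

Definition dil (n : nat) (t : R) (phi : 'rV[R]_n -> R) (x : 'rV[R]_n) : R :=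
  (Num.sqrt t) ^- n * phi ((Num.sqrt t)^-1 *: x).

Definition xG1 (n : nat) (j : 'I_n) (x : 'rV[R]_n) : R := x 0 j * G 1 x.

Definition A0 (n : nat) (u0 : 'rV[R]_n -> R) (t : R) (x : 'rV[R]_n) : R :=
  M0 u0 * G t x.

Fixpoint A0k (n : nat) (a : 'rV[R]_n) (f : R -> R) (u0 : 'rV[R]_n -> R)
  (k : nat) : R -> 'rV[R]_n -> R :=
  match k with
  | 0 => A0 u0
  | k'.+1 => fun t x => A0 u0 t x
      + duhamel a (fun s y => f (A0 u0 s y)) `[0, 1] t x
      + duhamel a (fun s y => f (A0k a f u0 k' s y)) `[1, t] t x
  end.

Definition Lambda (n : nat) (j : 'I_n) (t : R) (phi : 'rV[R]_n -> R)
  (x : 'rV[R]_n) : R :=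
  - (2^-1) * (Num.sqrt t)^-1 * M0 phi * dil t (xG1 j) x.

Definition psi0k (n : nat) (a : 'rV[R]_n) (f : R -> R) (u0 : 'rV[R]_n -> R)
  (u : R -> 'rV[R]_n -> R) (k : nat) (x : 'rV[R]_n) : R :=
  Rintegral leb `[0, 1] (fun s => f (u s x) - f (A0 u0 s x))
  + Rintegral leb `[1, +oo[ (fun s => f (u s x) - f (A0k a f u0 k.-1 s x)).

Definition A1k (n : nat) (a : 'rV[R]_n) (f : R -> R) (u0 : 'rV[R]_n -> R)
  (u : R -> 'rV[R]_n -> R) (k : nat) (t : R) (x : 'rV[R]_n) : R :=
  A0k a f u0 k t x
  + 2^-1 * (Num.sqrt t)^-1 * \sum_(j < n) Me j u0 * dil t (xG1 j) x
  + \sum_(j < n) a 0 j * Lambda j t (psi0k a f u0 u k) x.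

End Defs.

From HB Require Import structures.
From mathcomp Require Import all_boot all_order all_algebra.
From mathcomp Require Import all_classical all_reals all_analysis.
From mathcomp Require Import ring.
Import Order.TTheory GRing.Theory Num.Theory.
Import numFieldNormedType.Exports.
Local Open Scope classical_set_scope.
Local Open Scope ring_scope.

(* The terms of A_{0,k} cancel in A_{1,k} - A_{0,k}, and Lambda_{e_j,0} is a
   multiple of t^{-1/2} delta_t(x_j G_1), so the difference is
   (1/2) t^{-1/2} sum_j (M_{e_j}(u_0) - a_j M_0(psi_{0,k})) delta_t(x_j G_1),
   which is self-similar in t.  The identity is purely algebraic.  The functions
   x_j G_1 are linearly independent: at the j-th unit vector only the j-th
   one survives, and G_1 > 0. *)

Section DilationGauss.
Variables (R : realType) (n : nat).

Lemma dil1 (g : 'rV[R]_n -> R) : dil 1 g = g.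
Proof. by apply: funext => x; rewrite /dil sqrtr1 expr1n invr1 mul1r scale1r. Qed.

Lemma G_gt0 (t : R) (x : 'rV[R]_n) : 0 < t -> 0 < G t x.
Proof.
move=> t_gt0; rewrite /G mulr_gt0 ?expR_gt0 // invr_gt0 exprn_gt0 // sqrtr_gt0.
by rewrite !mulr_gt0 // pi_gt0.
Qed.

Lemma xG1_delta (i j : 'I_n) :
  xG1 j (delta_mx 0 i : 'rV[R]_n) = (j == i)%:R * G 1 (delta_mx 0 i : 'rV[R]_n).
Proof. by rewrite /xG1 mxE eqxx. Qed.

Lemma sum_xG1_eq0 (c : 'I_n -> R) :
  (fun x => \sum_(j < n) c j * xG1 j x) = (fun _ => 0) <-> forall j, c j = 0.
Proof.
split=> [S0 i | c0]; last first.
  by apply: funext => x; rewrite big1 // => j _; rewrite c0 mul0r.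
have := congr1 (@^~ (delta_mx 0 i : 'rV[R]_n)) S0.
rewrite (bigD1 i) //= big1 => [|j ji].
  rewrite addr0 xG1_delta eqxx mul1r => /eqP; rewrite mulf_eq0 => /orP[/eqP //|].
  by rewrite gt_eqF ?G_gt0.
by rewrite xG1_delta (negbTE ji) mul0r mulr0.
Qed.

End DilationGauss.

Lemma A1k_sub_A0k (R : realType) (n : nat) (a : 'rV[R]_n) (f : R -> R)
  (k : nat) (u0 : 'rV[R]_n -> R) (u : R -> 'rV[R]_n -> R) (t : R) (x : 'rV[R]_n) :
  A1k a f u0 u k t x - A0k a f u0 k t x =
  2^-1 * (Num.sqrt t)^-1 * \sum_(j < n)
     (Me j u0 - a 0 j * M0 (psi0k a f u0 u k)) * dil t (xG1 j) x.
Proof.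
rewrite /A1k; set A := A0k _ _ _ _ _ _.
have -> : forall S1 S2 : R, A + S1 + S2 - A = S1 + S2 by move=> S1 S2; ring.
by rewrite !mulr_sumr -big_split; apply: eq_bigr => j _; rewrite /Lambda /=; ring.
Qed.

Theorem lemma4p4 (R : realType) (n : nat) (a : 'rV[R]_n) (p : R)
  (f : R -> R) (k : nat) (u0 : 'rV[R]_n -> R) (u : R -> 'rV[R]_n -> R) :
  (1 <= n)%N -> a != 0 ->
  (forall x : R, derivable f x 1) -> continuous (derive1 f) ->
  f <> (fun _ => 0) -> f 0 = 0 ->
  (exists C : R, forall xi eta : R,
     `|f xi - f eta| <= C * (`|xi| `^ (p - 1) + `|eta| `^ (p - 1)) * `|xi - eta|) ->
  (0 < k)%N ->
  1 + (k.+2)%:R / ((k.+1)%:R * n%:R) < p ->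
  p < 1 + (k.+1)%:R / (k%:R * n%:R) ->
  L1_1 u0 -> Linfty u0 ->
  global_solution a f u0 u ->
  let D := fun t x => A1k a f u0 u k t x - A0k a f u0 k t x in
  let psi := psi0k a f u0 u k in
  (forall t : R, 1 <= t ->
     D t = (fun x => (Num.sqrt t)^-1 * dil t (D 1) x)) /\
  D 1 = (fun x => 2^-1 * \sum_(j < n) (Me j u0 - a 0 j * M0 psi) * xG1 j x) /\
  (D 1 <> (fun _ => 0) <-> exists j : 'I_n, Me j u0 - a 0 j * M0 psi != 0).
Proof.
move=> _ _ _ _ _ _ _ _ _ _ _ _ _ D psi.
set c := fun j => Me j u0 - a 0 j * M0 psi.
have D1E : D 1 = (fun x => 2^-1 * \sum_(j < n) c j * xG1 j x).
  apply: funext => x; rewrite /D A1k_sub_A0k sqrtr1 invr1 mulr1.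
  by under eq_bigr do rewrite dil1.
split; [|split=> //].
  move=> t _; apply: funext => x; rewrite D1E /D A1k_sub_A0k /dil.
  by rewrite !mulr_sumr; apply: eq_bigr => j _; rewrite /c; ring.
have D1_eq0 : D 1 = (fun _ => 0) <-> (fun x => \sum_(j < n) c j * xG1 j x) = (fun _ => 0).
  rewrite D1E; split=> S0; apply: funext => x; have /= := congr1 (@^~ x) S0.
    by move/eqP; rewrite mulf_eq0 invr_eq0 pnatr_eq0 /= => /eqP.
  by move=> ->; rewrite mulr0.
rewrite D1_eq0 sum_xG1_eq0; split=> [c_neq0 | [j cj_neq0] c0].
  apply: contrapT => no_j; apply: c_neq0 => j; apply/eqP; apply: contrapT => cj_neq0.
  by apply: no_j; exists j; apply/negP.
by move: cj_neq0; rewrite -/(c j) c0 eqxx.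
Qed.
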